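(* Let $G$ be a Polish group and let $B\subseteq G$ be universally measurable. The following are equivalent: (1) there exists a Borel probability measure $\mu$ on $G$ such that $\mu(gBh)=0$ for every $g,h\in G$; (2) there exists a Borel probability measure $\mu$ on $G$ such that $\mu$ has compact support and $\mu(gBh)=0$ for every $g,h\in G$; (3) there exists a Borel measure $\mu$ on $G$ such that $0<\mu(X)<\infty$ for some $\mu$-measurable set $X\subseteq G$ and $\mu(gBh)=0$ for every $g,h\in G$; (4) there exists a Borel measure $\mu$ on $G$ such that $0<\mu(C)<\infty$ for some compact set $C\subseteq G$ and $\mu(gBh)=0$ for every $g,h\in G$.
   Context: A Polish group is a topological group whose topology is separable and completely metrizable. A subset of a Polish space $X$ is universally measurable if it is $\nu$-measurable for every $\sigma$-finite Borel measure $\nu$ on $X$. Measures are outer measures (identified with the complete measure on their measurable sets); for an outer measure $\mu$ on $X$, $A$ is $\mu$-measurable if $\mu(E)=\mu(E\cap A)+\mu(E\setminus A)$ for all $E\subseteq X$; a measure is Borel if every Borel set is measurable for it. *)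

From HB Require Import structures.
From mathcomp Require Import all_boot all_order all_algebra.
From mathcomp Require Import all_classical all_reals all_analysis.
Set Implicit Arguments. Unset Strict Implicit. Unset Printing Implicit Defensive.
Import Order.TTheory GRing.Theory Num.Theory.
Local Open Scope classical_set_scope.
Local Open Scope ring_scope.

Definition is_group (G : Type) (mul : G -> G -> G) (inv : G -> G) (e : G) :=
  [/\ forall x y z, mul x (mul y z) = mul (mul x y) z,
      forall x, mul e x = x, forall x, mul x e = x,
      forall x, mul (inv x) x = e & forall x, mul x (inv x) = e].

Definition is_topological_group (G : topologicalType)
    (mul : G -> G -> G) (inv : G -> G) (e : G) :=
  [/\ is_group mul inv e,
      continuous (fun p : G * G => mul p.1 p.2) & continuous inv].

Definition separable_space (G : topologicalType) :=
  exists D : set G, countable D /\ dense D.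

Definition is_metric (R : realType) (G : Type) (d : G -> G -> R) :=
  [/\ forall x y, 0 <= d x y, forall x y, d x y = 0 <-> x = y,
      forall x y, d x y = d y x & forall x y z, d x z <= d x y + d y z].

Definition metric_induces_topology (R : realType) (G : topologicalType)
    (d : G -> G -> R) :=
  forall U : set G, open U <->
    (forall x, U x -> exists2 eps : R, 0 < eps & [set y | d x y < eps] `<=` U).

Definition metric_complete (R : realType) (G : Type) (d : G -> G -> R) :=
  forall u : nat -> G,
    (forall eps : R, 0 < eps -> exists N, forall m n,
       (N <= m)%N -> (N <= n)%N -> d (u m) (u n) < eps) ->
    exists x, forall eps : R, 0 < eps -> exists N, forall n,
       (N <= n)%N -> d (u n) x < eps.

Definition completely_metrizable (R : realType) (G : topologicalType) :=
  exists d : G -> G -> R,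
    [/\ is_metric d, metric_induces_topology d & metric_complete d].

Definition is_polish_group (R : realType) (G : topologicalType)
    (mul : G -> G -> G) (inv : G -> G) (e : G) :=
  [/\ is_topological_group mul inv e, separable_space G
    & completely_metrizable R G].

Definition borel_set (G : topologicalType) : set (set G) := <<s open >>.

Local Open Scope ereal_scope.

Definition is_borel_measure (R : realType) (G : topologicalType)
    (mu : {outer_measure set G -> \bar R}) :=
  forall A, borel_set A -> mu.-caratheodory A.

Definition is_borel_probability (R : realType) (G : topologicalType)
    (mu : {outer_measure set G -> \bar R}) :=
  is_borel_measure mu /\ mu setT = 1.

Definition is_sigma_finite (R : realType) (G : Type)
    (mu : {outer_measure set G -> \bar R}) :=
  exists F : nat -> set G,
    [/\ forall n, mu.-caratheodory (F n), forall n, mu (F n) < +oo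
      & \bigcup_n F n = setT].

Definition universally_measurable (R : realType) (G : topologicalType)
    (B : set G) :=
  forall nu : {outer_measure set G -> \bar R},
    is_borel_measure nu -> is_sigma_finite nu -> nu.-caratheodory B.

Definition measure_support (R : realType) (G : topologicalType)
    (mu : {outer_measure set G -> \bar R}) : set G :=
  [set x | forall U : set G, open U -> U x -> 0 < mu U].

Definition translate2 (G : Type) (mul : G -> G -> G) (g h : G) (B : set G)
  : set G := [set mul (mul g b) h | b in B].

From HB Require Import structures.
From mathcomp Require Import all_boot all_order all_algebra.
From mathcomp Require Import all_classical all_reals all_analysis.
From mathcomp Require Import lra.
Set Implicit Arguments. Unset Strict Implicit. Unset Printing Implicit Defensive.
Import Order.TTheory GRing.Theory Num.Theory.
Local Open Scope classical_set_scope.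
Local Open Scope ring_scope.
Local Open Scope ereal_scope.

(** Tightness: given a dense sequence, choose for each [n] finitely many balls of
  radius [1/(n+1)] whose union misses a set of measure at most [eps / 2^(n+1)];
  the points lying in one of the corresponding closed balls for every [n] form
  a complete, totally bounded, hence compact set whose complement has measure at
  most [eps]. *)

Lemma caratheodory_nonincreasing_cvg0 (R : realType) (T : Type)
    (mu : {outer_measure set T -> \bar R}) (B : (set T)^nat) :
  mu (B 0%N) < +oo -> (forall n, mu.-caratheodory (B n)) ->
  nonincreasing_seq B -> \bigcap_n B n = set0 ->
  mu \o B @ \oo --> 0.
Proof.
move=> B0 mB nB B0c.
have [[x0 _]|T0] := pselect (exists x : T, True); last first.
  rewrite (_ : mu \o B = cst 0); first exact: cvg_cst.
  apply/funext => n /=; rewrite (_ : B n = set0) ?outer_measure0 //.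
  by apply/seteqP; split=> // x; exfalso; apply: T0; exists x.
(* The library's Caratheodory measure space requires a pointed carrier. *)
pose T' : pointedType :=
  HB.pack T (gen_eqMixin T) (gen_choiceMixin T) (isPointed.Build T x0).
have := @nonincreasing_cvg_mu _
  (caratheodory_type (mu : {outer_measure set T' -> \bar R})) R mu B B0 mB.
by rewrite B0c measure0; apply.
Qed.

Section scaled_restriction.
Variables (R : realType) (T : Type) (mu : {outer_measure set T -> \bar R}).
Variables (A : set T) (c : {nonneg R}).

Definition mscale_restr (S : set T) : \bar R := c%:num%:E * mu (S `&` A).

Let mscale_restr0 : mscale_restr set0 = 0.
Proof. by rewrite /mscale_restr set0I outer_measure0 mule0. Qed.

Let mscale_restr_ge0 S : 0 <= mscale_restr S.
Proof. apply: mule_ge0; [by rewrite lee_fin | exact: outer_measure_ge0]. Qed.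

Let le_mscale_restr : {homo mscale_restr : X Y / X `<=` Y >-> X <= Y}.
Proof.
move=> X Y XY; apply: lee_wpmul2l; first by rewrite lee_fin.
by apply: le_outer_measure; exact: setSI.
Qed.

Let mscale_restr_sigma_subadditive : sigma_subadditive mscale_restr.
Proof.
move=> F; rewrite /mscale_restr nneseriesZl => [|n _]; last exact: outer_measure_ge0.
apply: lee_wpmul2l; first by rewrite lee_fin.
by rewrite setI_bigcupl; exact: outer_measure_sigma_subadditive.
Qed.

HB.instance Definition _ := isOuterMeasure.Build R T mscale_restr
  mscale_restr0 mscale_restr_ge0 le_mscale_restr mscale_restr_sigma_subadditive.

Lemma mscale_restr_caratheodory S :
  mu.-caratheodory S -> mscale_restr.-caratheodory S.
Proof.
move=> mS X; rewrite /mscale_restr (mS (X `&` A)) ge0_muleDr ?outer_measure_ge0 //.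
by rewrite setIAC [(X `&` A) `&` ~` S]setIAC.
Qed.

Lemma mscale_restr_setT : mscale_restr setT = c%:num%:E * mu A.
Proof. by rewrite /mscale_restr setTI. Qed.

Lemma mscale_restr_setC : mscale_restr (~` A) = 0.
Proof. by rewrite /mscale_restr setICl outer_measure0 mule0. Qed.

Lemma mscale_restr_null S : mu S = 0 -> mscale_restr S = 0.
Proof.
move=> muS0; apply/eqP; rewrite eq_le outer_measure_ge0 andbT.
rewrite -(mule0 c%:num%:E) -muS0; apply: lee_wpmul2l; first by rewrite lee_fin.
by apply: le_outer_measure; exact: subIsetl.
Qed.

End scaled_restriction.

Lemma natSinv_lt_exists (R : archiRealFieldType) (e : R) :
  (0 < e)%R -> exists n, (n.+1%:R^-1 < e)%R.
Proof.
by move=> e0; have [N _ /(_ N (leqnn N))] := near_infty_natSinv_lt (PosNum e0); exists N.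
Qed.

Lemma ultra_bigcup_ord (T : Type) (F : set_system T) (P : nat -> set T) (N : nat) :
  UltraFilter F -> F (\bigcup_(k in `I_N) P k) -> exists2 k, (k < N)%N & F (P k).
Proof.
move=> UF; elim: N => [|N IH] FPN.
  by have [y [k]] := filter_ex FPN.
have [FPN'|FnPN] := in_ultra_setVsetC (P N) UF; first by exists N.
have [|k kN Fk] := IH; last by exists k => //; exact: ltnW.
apply: filterS (filterI FPN FnPN) => y [[k /= kN Pky] nPNy]; exists k => //=.
by move: kN; rewrite ltnS leq_eqVlt => /orP[/eqP kN|//]; rewrite kN in Pky.
Qed.

Lemma closed_borel (G : topologicalType) (C : set G) : closed C -> borel_set C.
Proof.
move=> cC; rewrite -(setCK C) -setTD; apply: sigma_algebraCD.
by apply: sub_sigma_algebra; exact: closed_openC.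
Qed.

Lemma compact_borel (G : topologicalType) (C : set G) :
  hausdorff_space G -> compact C -> borel_set C.
Proof. by move=> hG /(compact_closed hG); exact: closed_borel. Qed.

Section metric_space.
Variables (R : realType) (G : topologicalType) (d : G -> G -> R).
Hypotheses (hd : is_metric d) (ht : metric_induces_topology d).
Local Open Scope ring_scope.

Lemma metric_ge0 x y : 0 <= d x y. Proof. by case: hd. Qed.
Lemma metric_sym x y : d x y = d y x. Proof. by case: hd. Qed.
Lemma metric_triangle x y z : d x z <= d x y + d y z. Proof. by case: hd. Qed.
Lemma metric_xx x : d x x = 0. Proof. by case: hd => _ dP _ _; exact: (dP x x).2. Qed.
Lemma metric_eq0 x y : d x y = 0 -> x = y. Proof. by case: hd => _ dP _ _; exact: (dP x y).1. Qed.

Lemma metric_ball_open x r : open [set y | d x y < r].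
Proof.
apply/ht => y /= dxy; exists (r - d x y); first by rewrite subr_gt0.
by move=> z /=; have := metric_triangle x y z; lra.
Qed.

Lemma metric_hausdorff : hausdorff_space G.
Proof.
move=> p q pq; apply: contrapT => p_neq_q.
have dpq_gt0 : 0 < d p q.
  by rewrite lt_neqAle metric_ge0 andbT; apply/eqP => /esym /metric_eq0.
have ball_nbhs x : nbhs x [set y | d x y < d p q / 2].
  by apply: open_nbhs_nbhs; split; [exact: metric_ball_open|rewrite /= metric_xx; lra].
have [z [/= dpz dqz]] := pq _ _ (ball_nbhs p) (ball_nbhs q).
by have := metric_triangle p z q; rewrite (metric_sym z q); lra.
Qed.

Lemma separable_metric_dense_seq (x0 : G) : separable_space G ->
  exists cen : nat -> G, forall y r, 0 < r -> exists k, d (cen k) y < r.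
Proof.
case=> D [cD dD].
pose G' : pointedType := HB.pack G (isPointed.Build G x0).
have /(@pcard_surjP G')[cen cenD] := cD.
exists cen => y r r0.
have yball : [set z | d y z < r] !=set0 by exists y; rewrite /= metric_xx.
have [x [/= dyx Dx]] := dD _ yball (metric_ball_open y r).
by have [k _ cenk] := cenD x Dx; exists k; rewrite cenk metric_sym.
Qed.

End metric_space.

Section tightness.
Variables (R : realType) (G : topologicalType) (d : G -> G -> R).
Hypotheses (hd : is_metric d) (ht : metric_induces_topology d)
  (hc : metric_complete d).
Local Open Scope ring_scope.

Lemma nested_closed_balls_limit (c ys : nat -> G) :
  (forall n k, (n <= k)%N -> d (c n) (ys k) <= n.+1%:R^-1) ->
  exists y, forall n, d (c n) y <= n.+1%:R^-1.
Proof.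
move=> cys; have [eps e0|y ys_y] := @hc ys.
  have [N HN] := natSinv_lt_exists (divr_gt0 e0 (ltr0Sn _ 1)).
  exists N => i j Ni Nj; have := metric_triangle hd (ys i) (c N) (ys j).
  rewrite (metric_sym hd (ys i) (c N)); have := cys N i Ni; have := cys N j Nj.
  move: HN; set r := _^-1; lra.
exists y => n; apply/ler_addgt0Pr => del del0.
have [M /(_ (maxn M n) (leq_maxl _ _))] := ys_y del del0.
have := cys n _ (leq_maxr M n); have := metric_triangle hd (c n) (ys (maxn M n)) y.
set r := _^-1; lra.
Qed.

Lemma compact_finite_ball_covers (cen : nat -> G) (N : nat -> nat) :
  compact [set y | forall n, exists2 k, (k < N n)%N & d (cen k) y <= n.+1%:R^-1].
Proof.
rewrite compact_ultra => F UF FK.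
pose cball k n := [set y | d (cen k) y <= n.+1%:R^-1].
have /choice[kn knP] : forall n, exists k, (k < N n)%N /\ F (cball k n).
  move=> n; have [k kN Fk] : exists2 k, (k < N n)%N & F (cball k n).
    by apply: (ultra_bigcup_ord UF); apply: filterS FK => y /(_ n) [k kN dk]; exists k.
  by exists k.
have F_balls n : F [set y | forall j, (j <= n)%N -> cball (kn j) j y].
  elim: n => [|n IH].
    by apply: filterS (knP 0%N).2 => y y0 j; rewrite leqn0 => /eqP ->.
  apply: filterS (filterI IH (knP n.+1).2) => y [yIH yn] j.
  by rewrite leq_eqVlt ltnS => /orP[/eqP ->|/yIH].
have /choice[ys ysP] : forall n, exists y, forall j, (j <= n)%N -> cball (kn j) j y.
  by move=> n; have [y] := filter_ex (F_balls n); exists y.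
have [y yP] := nested_closed_balls_limit (c := cen \o kn) (fun n k nk => ysP k n nk).
exists y; split=> [n|]; first by exists (kn n); [exact: (knP n).1|exact: yP].
move=> V; rewrite nbhsE => -[U [oU Uy] UV].
have [eps e0 epsU] := (ht U).1 oU y Uy.
have [M HM] := natSinv_lt_exists (divr_gt0 e0 (ltr0Sn _ 1)).
apply: filterS (knP M).2 => z zM; apply/UV/epsU => /=.
have := metric_triangle hd y (cen (kn M)) z; rewrite (metric_sym hd y (cen (kn M))).
move: HM (yP M) zM; rewrite /cball /=; set r := _^-1; lra.
Qed.

Definition finite_ball_union (cen : nat -> G) (N : nat) (r : R) : set G :=
  \bigcup_(k in `I_N) [set y | d (cen k) y < r].

Variable cen : nat -> G.
Hypothesis cen_dense : forall y (r : R), 0 < r -> exists k, d (cen k) y < r.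
Variable nu : {outer_measure set G -> \bar R}.
Hypotheses (nuB : is_borel_measure nu) (nu_fin : (nu setT < +oo)%E).

Lemma finite_ball_union_measure_lt n (eps : R) : 0 < eps ->
  exists N, (nu (~` finite_ball_union cen N n.+1%:R^-1) < eps%:E)%E.
Proof.
move=> e0; pose U N := finite_ball_union cen N n.+1%:R^-1.
have U_cara N : nu.-caratheodory (~` U N).
  apply: caratheodory_measurable_setC; apply: nuB; apply: sub_sigma_algebra.
  by apply: bigcup_open => k _; exact: metric_ball_open.
have U_decr : nonincreasing_seq (fun N => ~` U N).
  move=> N M NM; apply/subsetPset/subsetC => y [k /= kN dk].
  by exists k => //; exact: leq_trans kN NM.
have U_cap : \bigcap_N ~` U N = set0.
  apply/seteqP; split=> // y /= yU.
  have [k dk] : exists k, d (cen k) y < n.+1%:R^-1 by apply: cen_dense; rewrite invr_gt0.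
  by apply: (yU k.+1 I); exists k => /=.
have U0_fin : (nu (~` U 0%N) < +oo)%E.
  exact: le_lt_trans (le_outer_measure nu _ _ (subsetT _)) nu_fin.
have e0' : (0 < eps%:E)%E by rewrite lte_fin.
have [N _ NP] := caratheodory_nonincreasing_cvg0 U0_fin U_cara U_decr U_cap
  (open_ereal_lt' e0').
by exists N; apply: NP => /=.
Qed.

Lemma tight_of_dense_seq (eps : R) : 0 < eps ->
  exists K, compact K /\ (nu (~` K) <= eps%:E)%E.
Proof.
move=> e0; pose U n N := finite_ball_union cen N n.+1%:R^-1.
have /choice[N NP] : forall n, exists N, (nu (~` U n N) < (eps / (2 ^ n.+1)%:R)%:E)%E.
  by move=> n; apply: finite_ball_union_measure_lt; rewrite divr_gt0 // ltr0n expn_gt0.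
exists [set y | forall n, exists2 k, (k < N n)%N & d (cen k) y <= n.+1%:R^-1].
split; first exact: compact_finite_ball_covers.
apply: (@le_trans _ _ (nu (\bigcup_n ~` U n (N n)))).
  apply: le_outer_measure => y Ky; apply: contrapT => yU; apply: Ky => n.
  have [[k kN dk]|yUn] := pselect (U n (N n) y); first by exists k => //; exact: ltW.
  by exfalso; apply: yU; exists n.
apply: le_trans (outer_measure_sigma_subadditive nu _) _.
apply: le_trans (epsilon_trick0 xpredT (ltW e0)).
apply: lee_nneseries => [n _ _|n _]; first exact: outer_measure_ge0.
exact: ltW (NP n).
Qed.

End tightness.

Lemma polish_tight (R : realType) (G : topologicalType)
    (nu : {outer_measure set G -> \bar R}) :
  separable_space G -> completely_metrizable R G ->
  is_borel_measure nu -> nu setT < +oo ->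
  forall eps : R, (0 < eps)%R -> exists K, compact K /\ nu (~` K) <= eps%:E.
Proof.
move=> sepG [d [hd ht hc]] nuB nu_fin eps e0.
have [[x0 _]|G0] := pselect (exists x : G, True); last first.
  exists set0; split; first exact: compact0.
  rewrite setC0 (_ : setT = set0) ?outer_measure0 ?lee_fin ?ltW //.
  by apply/seteqP; split=> // x; exfalso; apply: G0; exists x.
have [cen cen_dense] := separable_metric_dense_seq hd ht x0 sepG.
exact: (tight_of_dense_seq hd ht hc cen_dense nuB nu_fin e0).
Qed.

Lemma polish_compact_gt0 (R : realType) (G : topologicalType)
    (nu : {outer_measure set G -> \bar R}) :
  separable_space G -> completely_metrizable R G ->
  is_borel_measure nu -> nu setT < +oo -> 0 < nu setT ->
  exists C, compact C /\ 0 < nu C.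
Proof.
move=> sepG cmG nuB nu_fin nu_gt0.
have nuT_fin : nu setT \is a fin_num by rewrite ge0_fin_numE ?outer_measure_ge0.
have m_gt0 : (0 < fine (nu setT) / 2)%R by rewrite divr_gt0 // -lte_fin fineK.
have [K [cK nuKC]] := polish_tight sepG cmG nuB nu_fin m_gt0.
exists K; split => //; rewrite lt_neqAle outer_measure_ge0 andbT; apply/eqP => nuK0.
have := le_outer_measureIC nu K setT; rewrite !setTI -nuK0 add0e.
move=> /le_trans /(_ nuKC); rewrite -[in X in X <= _](fineK nuT_fin) lee_fin.
by move: m_gt0; lra.
Qed.

Lemma measure_support_closed (R : realType) (G : topologicalType)
    (mu : {outer_measure set G -> \bar R}) : closed (measure_support mu).
Proof.
rewrite -openC openE => x nsx.
have [U [oU Ux nU]] : exists U, [/\ open U, U x & ~ 0 < mu U].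
  apply: contrapT => h; apply: nsx => U oU Ux; apply: contrapT => hn.
  by apply: h; exists U.
apply: filterS (@open_nbhs_nbhs _ x U (conj oU Ux)) => y Uy sy.
exact: nU (sy U oU Uy).
Qed.

Lemma measure_support_subset (R : realType) (G : topologicalType)
    (mu : {outer_measure set G -> \bar R}) (C : set G) :
  closed C -> mu (~` C) = 0 -> measure_support mu `<=` C.
Proof.
move=> cC muC0 x sx; apply: contrapT => Cx.
by have := sx _ (closed_openC cC) Cx; rewrite muC0 ltxx.
Qed.

Lemma restriction_charges_compact (R : realType) (G : topologicalType)
    (mu : {outer_measure set G -> \bar R}) (X : set G) :
  separable_space G -> completely_metrizable R G -> is_borel_measure mu ->
  0 < mu X -> mu X < +oo ->
  exists nu : {outer_measure set G -> \bar R},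
    [/\ is_borel_measure nu, exists C, [/\ compact C, 0 < nu C & nu C < +oo]
      & forall S, mu S = 0 -> nu S = 0].
Proof.
move=> sepG cmG muB X_gt0 X_fin.
pose nu := mscale_restr mu X (NngNum ler01).
have nuB : is_borel_measure nu by move=> S /muB; exact: mscale_restr_caratheodory.
have nuT : nu setT = mu X by rewrite /nu mscale_restr_setT mul1e.
have nuT_fin : nu setT < +oo by rewrite nuT.
have nuT_gt0 : 0 < nu setT by rewrite nuT.
have [C [cC C_gt0]] := polish_compact_gt0 sepG cmG nuB nuT_fin nuT_gt0.
exists nu; split => //; last exact: mscale_restr_null.
exists C; split => //; rewrite (le_lt_trans _ X_fin) // -nuT.
by apply: le_outer_measure; exact: subsetT.
Qed.

Lemma normalized_restriction_compact_support (R : realType) (G : topologicalType)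
    (mu : {outer_measure set G -> \bar R}) (C : set G) :
  hausdorff_space G -> is_borel_measure mu ->
  compact C -> 0 < mu C -> mu C < +oo ->
  exists nu : {outer_measure set G -> \bar R},
    [/\ is_borel_probability nu, compact (measure_support nu)
      & forall S, mu S = 0 -> nu S = 0].
Proof.
move=> hG muB cC C_gt0 C_fin.
have C_fin_num : mu C \is a fin_num by rewrite ge0_fin_numE ?outer_measure_ge0.
have mC_gt0 : (0 < fine (mu C))%R by rewrite -lte_fin fineK.
have c_ge0 : (0 <= (fine (mu C))^-1)%R by rewrite invr_ge0 ltW.
pose nu := mscale_restr mu C (NngNum c_ge0).
have nuT : nu setT = 1.
  by rewrite /nu mscale_restr_setT /= -(fineK C_fin_num) -EFinM mulVf ?gt_eqF.
exists nu; split.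
- by split=> // S /muB; exact: mscale_restr_caratheodory.
- apply: (subclosed_compact _ cC); first exact: measure_support_closed.
  exact: measure_support_subset (compact_closed hG cC) (mscale_restr_setC _ _ _).
- exact: mscale_restr_null.
Qed.

Unset Implicit Arguments.

Theorem theorem4p4 (R : realType) (G : topologicalType)
    (mul : G -> G -> G) (inv : G -> G) (e : G) (B : set G) :
  is_polish_group R mul inv e ->
  universally_measurable R B ->
  let P1 := exists mu : {outer_measure set G -> \bar R},
      is_borel_probability mu /\
      (forall g h, mu (translate2 mul g h B) = 0) in
  let P2 := exists mu : {outer_measure set G -> \bar R},
      [/\ is_borel_probability mu, compact (measure_support mu)
        & forall g h, mu (translate2 mul g h B) = 0] in
  let P3 := exists mu : {outer_measure set G -> \bar R},
      [/\ is_borel_measure mu,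
          (exists X : set G, [/\ mu.-caratheodory X, 0 < mu X & mu X < +oo])
        & forall g h, mu (translate2 mul g h B) = 0] in
  let P4 := exists mu : {outer_measure set G -> \bar R},
      [/\ is_borel_measure mu,
          (exists C : set G, [/\ compact C, 0 < mu C & mu C < +oo])
        & forall g h, mu (translate2 mul g h B) = 0] in
  [/\ P1 <-> P2, P2 <-> P3 & P3 <-> P4].
Proof.
move=> [_ sepG cmG] _ P1 P2 P3 P4.
have hG : hausdorff_space G.
  by have [d [hd ht _]] := cmG; exact: metric_hausdorff hd ht.
have to_P4 (mu : {outer_measure set G -> \bar R}) X :
    is_borel_measure mu -> 0 < mu X -> mu X < +oo ->
    (forall g h, mu (translate2 mul g h B) = 0) -> P4.
  move=> muB X_gt0 X_fin mu0.
  have [nu [nuB nuC nu_null]] := restriction_charges_compact sepG cmG muB X_gt0 X_fin.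
  by exists nu; split => // g h; exact/nu_null/mu0.
have P14 : P1 -> P4.
  by case=> mu [[muB mu1] mu0]; apply: (to_P4 mu setT); rewrite ?mu1 ?lte01 ?ltey.
have P34 : P3 -> P4 by case=> mu [muB [X [_ X_gt0 X_fin]] mu0]; exact: (to_P4 mu X).
have P42 : P4 -> P2.
  case=> mu [muB [C [cC C_gt0 C_fin]] mu0].
  have [nu [nu1 nuK nu_null]] :=
    normalized_restriction_compact_support hG muB cC C_gt0 C_fin.
  by exists nu; split => // g h; exact/nu_null/mu0.
have P43 : P4 -> P3.
  case=> mu [muB [C [cC C_gt0 C_fin]] mu0]; exists mu; split => //.
  by exists C; split => //; apply: muB; exact: compact_borel.
have P21 : P2 -> P1 by case=> mu [mu1 _ mu0]; exists mu.
by split; [split=> [/P14/P42|/P21] | split=> [/P21/P14/P43|/P34/P42] | split=> [/P34|/P43]].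
Qed.
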